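(* For any $m\ge2$, any $\beta_1,\dots,\beta_m\in\Delta_+$, any $F_{\beta_k}\in\mathfrak g_{-\beta_k}$ ($k=1,\dots,m$) and any $1\le\ell<m$, $$A_X(F_{\beta_1}\cdots F_{\beta_\ell}F_{\beta_{\ell+1}}\cdots F_{\beta_m})-A_X(F_{\beta_1}\cdots F_{\beta_{\ell+1}}F_{\beta_\ell}\cdots F_{\beta_m})=A_X(F_{\beta_1}\cdots[F_{\beta_\ell},F_{\beta_{\ell+1}}]\cdots F_{\beta_m}),$$ where on the right $[F_{\beta_\ell},F_{\beta_{\ell+1}}]\in\mathfrak g_{-(\beta_\ell+\beta_{\ell+1})}$ is treated as a single factor (the right side being $0$ if this commutator is $0$). Consequently $A_X$ extends to a well-defined linear map from $U(\mathfrak n_-)$ to $U(\mathfrak n_-)$-valued rational functions of $X_1,\dots,X_r$.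
   Context: $\mathfrak g$ is a simple complex Lie algebra with Cartan subalgebra $\mathfrak h$, roots $\Delta$, simple roots $\alpha_1,\dots,\alpha_r$, positive roots $\Delta_+$, $\mathfrak n_-=\bigoplus_{\alpha\in\Delta_+}\mathfrak g_{-\alpha}$. For $\beta\in\mathfrak h^*$ and $\lambda\in\mathfrak h$ put $X_\beta=e^{-2\pi i\beta(\lambda)}$, $X_j=X_{\alpha_j}$ (so $X_\beta$ is a monomial in $X_1,\dots,X_r$ for $\beta$ in the root lattice). For $\beta_1,\dots,\beta_m\in\Delta_+$ (the $\beta_k$ need not be distinct), $F_{\beta_k}\in\mathfrak g_{-\beta_k}$, and a permutation $\sigma\in S_m$, let $a_k^\sigma=\#\{j:\ k\le j\le m-1,\ \sigma(j)>\sigma(j+1)\}$ and $$A_X^\sigma(F_{\beta_1}\cdots F_{\beta_m})=\prod_{k=1}^m\frac{X_{\beta_{\sigma(k)}}^{a_k^\sigma+1}}{1-X_{\beta_{\sigma(1)}}\cdots X_{\beta_{\sigma(k)}}}\;F_{\beta_{\sigma(1)}}\cdots F_{\beta_{\sigma(m)}},$$ $A_X(F_{\beta_1}\cdots F_{\beta_m})=\sum_{\sigma\in S_m}A_X^\sigma(F_{\beta_1}\cdots F_{\beta_m})$ (a formula for each ordered tuple of root vectors, products taken in $U(\mathfrak n_-)$), and $A_X(1)=1$; $A_X$ is linear in each $F_{\beta_k}$. *)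

From HB Require Import structures.
From mathcomp Require Import all_boot all_order all_algebra all_fingroup.
Set Implicit Arguments. Unset Strict Implicit. Unset Printing Implicit Defensive.
Import GRing.Theory.
Local Open Scope ring_scope.

(* A positive root beta = sum_j n_j alpha_j is encoded by its coefficient
   vector n : 'I_r -> nat; X_beta = prod_j X_j ^ n_j. *)
Definition Xroot (K : fieldType) (r : nat) (X : 'I_r -> K) (b : 'I_r -> nat) : K :=
  \prod_(j < r) X j ^+ b j.

(* value of a permutation at a nat index (0 outside range) *)
Definition permv (m : nat) (s : 'S_m) (j : nat) : nat :=
  if (insub j : option 'I_m) is Some i then nat_of_ord (s i) else 0%N.

(* a_k^sigma, 0-indexed: #{ j : k <= j <= m-2, sigma(j) > sigma(j+1) } *)
Definition adesc (m : nat) (s : 'S_m) (k : nat) : nat :=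
  count (fun j => (permv s j.+1 < permv s j)%N) (iota k (m.-1 - k)).

(* the scalar coefficient of A_X^sigma for weights w k = X_{beta_k} *)
Definition AXcoef (K : fieldType) (m : nat) (w : 'I_m -> K) (s : 'S_m) : K :=
  \prod_(k < m) (w (s k) ^+ (adesc s k).+1 /
                 (1 - \prod_(i < m | (i <= k)%N) w (s i))).

Definition AX (K : fieldType) (A : algType K) (r : nat) (X : 'I_r -> K)
    (bs : seq ('I_r -> nat)) (Fs : seq A) : A :=
  \sum_(s : 'S_(size Fs))
     AXcoef (fun k : 'I_(size Fs) => Xroot X (nth (fun _ => 0%N) bs k)) s
       *: \prod_(k < size Fs) nth 0 Fs (s k).

Definition swap_at (T : Type) (x0 : T) (i : nat) (s : seq T) : seq T :=
  take i s ++ nth x0 s i.+1 :: nth x0 s i :: drop i.+2 s.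

Definition merge_at (T : Type) (i : nat) (y : T) (s : seq T) : seq T :=
  take i s ++ y :: drop i.+2 s.

Definition addroot (r : nat) (b c : 'I_r -> nat) : 'I_r -> nat := fun j => (b j + c j)%N.

(* Reindexing the sum for the swapped word by sigma |-> (i i+1) o sigma reproduces the
   weights and the monomial of sigma and only changes the descent numbers a_k.  If i and
   i+1 are not adjacent in sigma, the descent numbers do not change and the two terms
   cancel.  If they sit at consecutive positions p, p+1 in increasing order, the
   transposition creates one descent at p, so the difference of the coefficients is
   c(sigma) (1 - X_sigma(1) ... X_sigma(p+1)), i.e. c(sigma) with its p-th denominator
   cancelled; the decreasing order is the same situation after composing with (i i+1).
   This reduced coefficient only involves the two adjacent weights through their product
   and is the coefficient of the word where positions p, p+1 are merged into one letter
   of weight X_i X_i+1, while the two orders of F_i, F_i+1 combine into the commutator. *)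

From HB Require Import structures.
From mathcomp Require Import all_boot all_order all_algebra all_fingroup zify.
Set Implicit Arguments. Unset Strict Implicit. Unset Printing Implicit Defensive.
Import GRing.Theory.
Local Open Scope ring_scope.

Section ProdAt.
Variable R : nzRingType.
Implicit Types (g h : nat -> R) (N p : nat).

Lemma prod_split_at N p g : (p < N)%N ->
  \prod_(k < N) g k = (\prod_(k < p) g k) * g p * \prod_(p.+1 <= k < N) g k.
Proof.
move=> hp; rewrite -!(big_mkord xpredT) (big_cat_nat (leq0n p) (ltnW hp)) /=.
by rewrite (big_ltn hp) mulrA.
Qed.

Lemma prod_merge_at N p h g : (p < N)%N ->
  (forall k, (k < p)%N -> g k = h k) -> g p = h p * h p.+1 ->
  (forall k, (p < k < N)%N -> g k = h k.+1) ->
  \prod_(k < N.+1) h k = \prod_(k < N) g k.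
Proof.
move=> hp glo gp ghi; rewrite (prod_split_at _ hp).
have hp1 : (p < N.+1)%N := ltnW hp.
have hp2 : (p.+1 < N.+1)%N := hp.
rewrite -!(big_mkord xpredT) (big_cat_nat (leq0n p) (ltnW hp1)) /=.
rewrite (big_ltn hp1) (big_ltn hp2) -!mulrA gp -!mulrA.
congr (_ * _); first by apply: eq_big_nat => k /andP[_ hk]; rewrite glo.
congr (_ * (_ * _)); rewrite big_add1 /=.
by apply: eq_big_nat => k /andP[hk1 hk2]; rewrite ghi // hk1.
Qed.

Lemma prod_subr_at N p g1 g2 g : (p < N)%N ->
  (forall k, (k < N)%N -> k != p -> g1 k = g k /\ g2 k = g k) ->
  g p = g1 p - g2 p ->
  \prod_(k < N) g1 k - \prod_(k < N) g2 k = \prod_(k < N) g k.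
Proof.
move=> hp hg gp; rewrite !(prod_split_at _ hp) gp.
have agree j : (forall k, (k < N)%N -> k != p -> j k = g k) ->
    \prod_(k < p) j k = \prod_(k < p) g k /\
    \prod_(p.+1 <= k < N) j k = \prod_(p.+1 <= k < N) g k.
  move=> hj; split; first by apply: eq_bigr => k _; rewrite hj ?ltn_eqF // (ltn_trans _ hp).
  by apply: eq_big_nat => k /andP[hk1 hk2]; rewrite hj ?gtn_eqF.
have [lo1 hi1] := agree g1 (fun k hk hkp => proj1 (hg k hk hkp)).
have [lo2 hi2] := agree g2 (fun k hk hkp => proj2 (hg k hk hkp)).
by rewrite lo1 hi1 lo2 hi2 mulrBr mulrBl.
Qed.

End ProdAt.

Definition adjswap (i k : nat) : nat :=
  if k == i then i.+1 else if k == i.+1 then i else k.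

Lemma adjswapK i : involutive (adjswap i).
Proof. by move=> k; rewrite /adjswap; do ![case: eqP]; lia. Qed.

Lemma adjswap_id i k : k != i -> k != i.+1 -> adjswap i k = k.
Proof. by rewrite /adjswap => /negbTE-> /negbTE->. Qed.

Lemma adjswap_ltE i a b : a != b -> ~~ ((a == i) && (b == i.+1)) ->
  ~~ ((a == i.+1) && (b == i)) -> (adjswap i b < adjswap i a)%N = (b < a)%N.
Proof. by rewrite /adjswap; do ![case: eqP]; lia. Qed.

Definition merge_fun (T : Type) (h : nat -> T) (y : T) (c k : nat) : T :=
  if (k < c)%N then h k else if k == c then y else h k.+1.

Lemma merge_fun_bump (T : Type) (h : nat -> T) y i x : x != i ->
  merge_fun h y i x = h (bump i.+1 x).
Proof. by move=> hx; rewrite /merge_fun /bump (negbTE hx); case: ltnP => h1; congr h; lia. Qed.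

Lemma adjswap_bump i x : x != i -> adjswap i (bump i.+1 x) = bump i.+1 x.
Proof. by rewrite /adjswap /bump; do ![case: eqP]; lia. Qed.

Section Coefficients.
Variable K : fieldType.
Implicit Types (w v : nat -> K) (e : nat -> nat) (N p : nat).

Definition prefix_prod w k := \prod_(j < k.+1) w j.

Definition coefn N w e := \prod_(k < N) (w k ^+ (e k).+1 / (1 - prefix_prod w k)).

Definition coefn_drop N w e p :=
  (\prod_(k < N) w k ^+ (e k).+1) *
  \prod_(k < N | nat_of_ord k != p) (1 - prefix_prod w k)^-1.

Lemma eq_prefix_prod w v k : (forall j, (j <= k)%N -> w j = v j) ->
  prefix_prod w k = prefix_prod v k.
Proof. by move=> h; apply: eq_bigr => j _; rewrite h // -ltnS. Qed.

Lemma eq_coefn N w v e (e' : nat -> nat) : (forall k, (k < N)%N -> w k = v k) ->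
  (forall k, (k < N)%N -> e k = e' k) -> coefn N w e = coefn N v e'.
Proof.
move=> hw he; apply: eq_bigr => k _; rewrite hw // he //.
by rewrite (@eq_prefix_prod w v) // => j hj; rewrite hw // (leq_ltn_trans hj).
Qed.

Lemma coefn_shift N w e p : (p < N)%N ->
  coefn N w (fun k => e k + (k <= p))%N = coefn N w e * prefix_prod w p.
Proof.
move=> hp; rewrite /coefn /prefix_prod.
have -> : \prod_(j < p.+1) w j = \prod_(k < N) w k ^+ (k <= p).
  rewrite (big_ord_widen N w hp) big_mkcond /=; apply: eq_bigr => k _.
  by rewrite ltnS; case: (nat_of_ord k <= p)%N; rewrite ?expr1 ?expr0.
rewrite -big_split /=; apply: eq_bigr => k _.
by rewrite -addSn exprD mulrAC.
Qed.

Lemma coefn_mul_denom N w e p : (p < N)%N -> 1 - prefix_prod w p != 0 ->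
  coefn N w e * (1 - prefix_prod w p) = coefn_drop N w e p.
Proof.
move=> hp hn; rewrite /coefn /coefn_drop.
under eq_bigr do rewrite mulrC.
rewrite big_split /= mulrC (bigD1 (Ordinal hp)) //= !mulrA [in RHS]mulrC.
by rewrite mulfV // mul1r.
Qed.

Lemma prefix_prod_merge w v p k : (p <= k)%N ->
  (forall j, (j < p)%N -> v j = w j) -> v p = w p * w p.+1 ->
  (forall j, (p < j <= k)%N -> v j = w j.+1) ->
  prefix_prod v k = prefix_prod w k.+1.
Proof. by move=> hpk vlo vp vhi; symmetry; apply: (@prod_merge_at _ k.+1 p). Qed.

Lemma coefn_drop_merge N w v e (e' : nat -> nat) p : (p < N)%N -> e p = e p.+1 ->
  (forall k, (k < p)%N -> v k = w k) -> v p = w p * w p.+1 ->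
  (forall k, (p < k < N)%N -> v k = w k.+1) ->
  (forall k, (k < p)%N -> e' k = e k) -> (forall k, (p <= k < N)%N -> e' k = e k.+1) ->
  coefn_drop N.+1 w e p = coefn N v e'.
Proof.
move=> hp he vlo vp vhi elo ehi; rewrite /coefn_drop /coefn.
under [RHS]eq_bigr do rewrite mulrC.
rewrite big_split /= mulrC; congr (_ * _).
  rewrite big_mkcond /=.
  apply: (@prod_merge_at _ N p (fun k => if k != p then (1 - prefix_prod w k)^-1 else 1)
    (fun k => (1 - prefix_prod v k)^-1)) => //.
  - move=> k hk; rewrite ltn_eqF //.
    by rewrite (@eq_prefix_prod v w) // => j hj; rewrite vlo // (leq_ltn_trans hj hk).
  - rewrite eqxx gtn_eqF // mul1r (@prefix_prod_merge w v p p) //.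
    by move=> j /andP[hj1 hj2]; rewrite vhi // hj1 (leq_ltn_trans hj2 hp).
  - move=> k /andP[hk1 hk2]; rewrite gtn_eqF 1?ltnW //.
    rewrite (@prefix_prod_merge w v p k) 1?ltnW //.
    by move=> j /andP[hj1 hj2]; apply: vhi; rewrite hj1 (leq_ltn_trans hj2 hk2).
apply: (@prod_merge_at _ N p (fun k => w k ^+ (e k).+1) (fun k => v k ^+ (e' k).+1)) => //.
- by move=> k hk; rewrite vlo // elo.
- by rewrite vp ehi ?leqnn ?hp // he exprMn.
- by move=> k /andP[hk1 hk2]; rewrite vhi ?hk1 // ehi // (ltnW hk1).
Qed.

(* The dropped denominator is the only one that sees the order of w p and w p.+1. *)
Lemma coefn_drop_swap N w v e p : (p < N)%N -> e p = e p.+1 ->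
  (forall k, (k < N.+1)%N -> v k = w (adjswap p k)) ->
  coefn_drop N.+1 v e p = coefn_drop N.+1 w e p.
Proof.
move=> hp he hv.
pose u k := if (k < p)%N then w k else if k == p then w p * w p.+1 else w k.+1.
pose e' k := if (k < p)%N then e k else e k.+1.
have ulo k : (k < p)%N -> u k = w k by move=> hk; rewrite /u hk.
have up : u p = w p * w p.+1 by rewrite /u ltnn eqxx.
have uhi k : (p < k < N)%N -> u k = w k.+1.
  by case/andP=> hk _; rewrite /u ltnNge (ltnW hk) /= gtn_eqF.
have elo k : (k < p)%N -> e' k = e k by move=> hk; rewrite /e' hk.
have ehi k : (p <= k < N)%N -> e' k = e k.+1.
  by case/andP=> hk _; rewrite /e' ltnNge hk.
have hp1 : (p < N.+1)%N := ltnW hp.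
rewrite (@coefn_drop_merge N w u e e') // (@coefn_drop_merge N v u e e') //.
- move=> k hk; have hkN : (k < N.+1)%N by lia.
  by rewrite ulo // hv // adjswap_id //; lia.
- by rewrite up !hv // /adjswap eqxx gtn_eqF // eqxx mulrC.
- move=> k /andP[hk1 hk2]; have hkN : (k.+1 < N.+1)%N by lia.
  by rewrite uhi ?hk1 // hv // adjswap_id //; lia.
Qed.

End Coefficients.
Arguments prefix_prod {K}.
Arguments coefn {K}.
Arguments coefn_drop {K}.

(* [AX] with weights and factors indexed by [nat] instead of a size-dependent ordinal,
   so that swapping or merging two positions is a mere change of index function. *)
Definition AXn (K : fieldType) (A : algType K) N (W : nat -> K) (F : nat -> A) : A :=
  \sum_(s : 'S_N) coefn N (fun k => W (permv s k)) (adesc s) *: \prod_(k < N) F (permv s k).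

Lemma permvE N (s : 'S_N) (k : 'I_N) : permv s k = s k.
Proof. by rewrite /permv valK. Qed.

Lemma permv_lt N (s : 'S_N) k : (0 < N)%N -> (permv s k < N)%N.
Proof. by move=> hN; rewrite /permv; case: insubP. Qed.

Lemma permv_inj N (s : 'S_N) x y : (x < N)%N -> (y < N)%N ->
  permv s x = permv s y -> x = y.
Proof.
move=> hx hy.
rewrite -[x]/(nat_of_ord (Ordinal hx)) -[y]/(nat_of_ord (Ordinal hy)) !permvE.
by move/val_inj/perm_inj => ->.
Qed.
Arguments permv_inj {N s x y}.

Lemma permv_eq N (s : 'S_N) x y : (x < N)%N -> (y < N)%N ->
  (permv s x == permv s y) = (x == y).
Proof. by move=> hx hy; apply/eqP/eqP => [/(permv_inj hx hy)|->]. Qed.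

Lemma eq_AXn (K : fieldType) (A : algType K) N (W W' : nat -> K) (F F' : nat -> A) :
  (forall k, (k < N)%N -> W k = W' k) -> (forall k, (k < N)%N -> F k = F' k) ->
  AXn N W F = AXn N W' F'.
Proof.
move=> hW hF; apply: eq_bigr => s _; congr (_ *: _).
  by apply: eq_coefn => // k hk; rewrite hW // permv_lt //; lia.
by apply: eq_bigr => k _; rewrite hF // permvE.
Qed.

Lemma AX_AXn (K : fieldType) (A : algType K) r (X : 'I_r -> K) bs (Fs : seq A) :
  AX X bs Fs = AXn (size Fs) (fun k => Xroot X (nth (fun _ => 0%N) bs k)) (nth 0 Fs).
Proof.
apply: eq_bigr => s _; congr (_ *: _); last by apply: eq_bigr => k _; rewrite permvE.
apply: eq_bigr => k _; rewrite permvE /prefix_prod.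
rewrite (big_ord_widen _ (fun j => Xroot X (nth _ bs (permv s j))) (ltn_ord k)).
by congr (_ / (1 - _)); apply: eq_big => // j _; rewrite permvE.
Qed.

Lemma count_differ_at (a b : pred nat) s j0 :
  (forall j, j \in s -> j != j0 -> a j = b j) -> a j0 -> ~~ b j0 ->
  count a s = (count b s + count (pred1 j0) s)%N.
Proof.
move=> h ha hb; elim: s h => [|x s IH] h //=.
rewrite IH; last by move=> j hj; apply: h; rewrite inE hj orbT.
case: (eqVneq x j0) => [->|hx]; first by rewrite ha (negbTE hb) /= add0n addnCA.
by rewrite (h x) ?inE ?eqxx // /= add0n addnA.
Qed.

Lemma sum_perm_sending (R : nmodType) m (a b : 'I_m.+1) (G : 'S_m.+1 -> R) :
  \sum_(s : 'S_m.+1 | s a == b) G s = \sum_(s : 'S_m) G (lift_perm a b s).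
Proof.
rewrite (reindex (lift_perm a b)); last first.
  pose ulsf i (s : 'S_m.+1) k := odflt k (unlift (s i) (s (lift i k))).
  have ulsfK i (s : 'S_m.+1) k: lift (s i) (ulsf i s k) = s (lift i k).
    rewrite /ulsf; have:= neq_lift i k.
    by rewrite -(can_eq (permK s)) => /unlift_some[] ? ? ->.
  have inj_ulsf: injective (ulsf a _).
    move=> s; apply: can_inj (ulsf (s a) s^-1%g) _ => k'.
    by rewrite {1}/ulsf ulsfK !permK liftK.
  exists (fun s => perm (inj_ulsf s)) => [s _ | s].
    by apply/permP=> k'; rewrite permE /ulsf lift_perm_lift lift_perm_id liftK.
  move/(s _ =P _) => si0; apply/permP=> k.
  case: (unliftP a k) => [k'|] ->; rewrite ?lift_perm_id //.
  by rewrite lift_perm_lift -si0 permE ulsfK.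
by apply: eq_bigl => s; rewrite lift_perm_id eqxx.
Qed.

Section AdjacentTransposition.
Variables (n i : nat).
Hypothesis hi : (i < n)%N.

Let T : 'S_n.+1 := tperm (@Ordinal n.+1 i (ltnW hi)) (@Ordinal n.+1 i.+1 hi).

Lemma mulTK (s : 'S_n.+1) : (s * T * T)%g = s.
Proof. by rewrite -mulgA tperm2 mulg1. Qed.

Lemma permv_mulT (s : 'S_n.+1) k : (k < n.+1)%N -> permv (s * T) k = adjswap i (permv s k).
Proof.
move=> hk; rewrite -[k]/(nat_of_ord (Ordinal hk)) !permvE permM /T /adjswap.
case: tpermP => [->|->|/eqP h1 /eqP h2] /=; rewrite ?eqxx ?(gtn_eqF (ltnSn i)) //.
by rewrite -!val_eqE /= in h1 h2; rewrite (negbTE h1) (negbTE h2).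
Qed.

Definition up_at (v : 'S_n.+1) p := (permv v p == i) && (permv v p.+1 == i.+1).
Definition down_at (v : 'S_n.+1) p := (permv v p == i.+1) && (permv v p.+1 == i).

Lemma down_at_mulT (s : 'S_n.+1) p : (p < n)%N -> down_at (s * T) p = up_at s p.
Proof.
move=> hp; rewrite /down_at /up_at !permv_mulT ?ltnS ?(ltnW hp) //.
by rewrite /adjswap; do ![case: eqP]; lia.
Qed.

Lemma up_at_mulT (s : 'S_n.+1) p : (p < n)%N -> up_at (s * T) p = down_at s p.
Proof. by move=> hp; rewrite -{2}[s]mulTK down_at_mulT. Qed.

Lemma up_at_other (v : 'S_n.+1) p j : (p < n)%N -> up_at v p -> (j < n)%N -> j != p ->
  ~~ up_at v j && ~~ down_at v j.
Proof.
move=> hp /andP[/eqP vp /eqP vp1] hj hjp.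
rewrite /up_at /down_at -vp1 -vp !permv_eq ?ltnS ?(ltnW hp) ?ltnS ?(ltnW hj) //.
by rewrite (negbTE hjp); lia.
Qed.

Lemma descent_mulT (v : 'S_n.+1) j : (j < n)%N -> ~~ up_at v j -> ~~ down_at v j ->
  (permv (v * T) j.+1 < permv (v * T) j)%N = (permv v j.+1 < permv v j)%N.
Proof.
move=> hj hu hd; rewrite !permv_mulT ?ltnS ?(ltnW hj) // adjswap_ltE //.
by rewrite permv_eq ?ltnS ?(ltnW hj) //; lia.
Qed.

Lemma count_pred1_iota k p : (p < n)%N -> count (pred1 p) (iota k (n - k)) = (k <= p)%N.
Proof. by move=> hp; rewrite (count_uniq_mem _ (iota_uniq _ _)) mem_iota; lia. Qed.

Lemma adesc_mulT_up (v : 'S_n.+1) p k : (p < n)%N -> up_at v p ->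
  adesc (v * T) k = (adesc v k + (k <= p))%N.
Proof.
move=> hp hu; rewrite /adesc /= -(@count_pred1_iota k p hp).
have /andP[/eqP vp /eqP vp1] := hu.
apply: count_differ_at.
- move=> j; rewrite mem_iota => /andP[hkj hj] hjp.
  have hjn : (j < n)%N by lia.
  by case/andP: (@up_at_other v p j hp hu hjn hjp) => ? ?; rewrite /= descent_mulT.
- by rewrite /= !permv_mulT ?ltnS ?(ltnW hp) // vp vp1 /adjswap eqxx gtn_eqF // eqxx.
- by rewrite /= vp vp1 ltnNge leqnSn.
Qed.

Lemma adesc_mulT_free (v : 'S_n.+1) k :
  (forall p, (p < n)%N -> ~~ up_at v p && ~~ down_at v p) ->
  adesc (v * T) k = adesc v k.
Proof.
move=> h; apply: eq_in_count => j; rewrite mem_iota => /andP[hkj hj].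
have hjn : (j < n)%N by lia.
by case/andP: (h j hjn) => ? ?; rewrite /= descent_mulT.
Qed.

Lemma adesc_up_at (v : 'S_n.+1) p : (p < n)%N -> up_at v p -> adesc v p = adesc v p.+1.
Proof.
move=> hp /andP[/eqP vp /eqP vp1]; rewrite /adesc /= -(subnSK hp) /=.
by rewrite vp vp1 ltnNge leqnSn.
Qed.

Lemma adjswap_permv_up (v : 'S_n.+1) p k : (p < n)%N -> up_at v p -> (k < n.+1)%N ->
  adjswap i (permv v k) = permv v (adjswap p k).
Proof.
move=> hp /andP[/eqP vp /eqP vp1] hk; rewrite /adjswap.
have [->|hkp] := eqVneq k p; first by rewrite vp eqxx vp1.
have [->|hkp1] := eqVneq k p.+1; first by rewrite vp1 gtn_eqF // eqxx vp.
by rewrite -vp1 -vp !permv_eq ?ltnS ?(ltnW hp) // (negbTE hkp) (negbTE hkp1).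
Qed.

Section LiftAtAscent.
Variables (rho : 'S_n) (p : 'I_n).
Hypothesis rho_p : permv rho p = i.

(* [v] is [rho] with the value [i] at position [p] split into [i, i.+1] at
   positions [p, p.+1]; these are all the permutations with [up_at v p]. *)
Let v : 'S_n.+1 := lift_perm (lift ord0 p) (@Ordinal n.+1 i.+1 hi) rho.

Lemma permv_lift_bump k : (k < n)%N -> permv v (bump p.+1 k) = bump i.+1 (permv rho k).
Proof.
move=> hk; have := congr1 (@nat_of_ord _)
  (lift_perm_lift (lift ord0 p) (@Ordinal n.+1 i.+1 hi) rho (Ordinal hk)).
by rewrite -!permvE /= -(permvE rho (Ordinal hk)) => <-.
Qed.

Lemma permv_lift_succ : permv v p.+1 = i.+1.
Proof. by rewrite -[p.+1]/(nat_of_ord (lift ord0 p)) permvE lift_perm_id. Qed.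

Lemma permv_lift_lo k : (k <= p)%N -> permv v k = bump i.+1 (permv rho k).
Proof.
by move=> hk; rewrite -permv_lift_bump ?(leq_ltn_trans hk) // /bump leqNgt ltnS hk.
Qed.

Lemma permv_lift_hi k : (p < k)%N -> (k < n)%N -> permv v k.+1 = bump i.+1 (permv rho k).
Proof. by move=> hk hkn; rewrite -permv_lift_bump // /bump hk. Qed.

Lemma permv_rho_neq k : (k < n)%N -> k != p -> permv rho k != i.
Proof. by move=> hk hkp; rewrite -rho_p permv_eq. Qed.

Lemma adesc_lift_hi k : (p <= k)%N -> adesc v k.+1 = adesc rho k.
Proof.
move=> hpk; rewrite /adesc /= subnS -[k.+1]add1n iotaDl count_map.
have -> : (n.-1 - k = (n - k).-1)%N by rewrite -!subn1 subnAC.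
apply: eq_in_count => j; rewrite mem_iota => /andP[hkj hj] /=.
have [hjn hpj] : (j.+1 < n /\ p <= j)%N by move: hj; rewrite -subn1; lia.
rewrite add1n permv_lift_hi ?ltnS //.
have [ejp|hjp] := eqVneq j p.
  have hne : permv rho p.+1 != i by apply: permv_rho_neq; rewrite -?ejp ?gtn_eqF.
  by rewrite ejp permv_lift_succ rho_p /bump; lia.
have hpj' : (p < j)%N by rewrite ltn_neqAle eq_sym hjp.
by rewrite permv_lift_hi ?(ltnW hjn) // /bump; lia.
Qed.

Lemma adesc_lift_lo k : (k <= p)%N -> adesc v k = adesc rho k.
Proof.
move=> hkp; have := adesc_lift_hi (leqnn p); rewrite /adesc /=.
have hpn := ltn_ord p.
have -> : (n - k = (p - k) + (n - p))%N by lia.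
have -> : (n.-1 - k = (p - k) + (n.-1 - p))%N by rewrite -!subn1; lia.
rewrite !iotaD !count_cat subnKC // => ehi; congr (_ + _)%N; last first.
  rewrite -ehi -(subnSK (ltn_ord p)) /= permv_lift_succ permv_lift_lo // rho_p.
  by rewrite /bump ltnn /= ltnNge leqnSn.
apply: eq_in_count => j; rewrite mem_iota subnKC // => /andP[hkj hjp].
by rewrite /= !permv_lift_lo ?(ltnW hjp) // /bump; lia.
Qed.

Lemma coefn_drop_lift (K : fieldType) (W : nat -> K) :
  coefn_drop n.+1 (fun k => W (permv v k)) (adesc v) p =
  coefn n (fun k => merge_fun W (W i * W i.+1) i (permv rho k)) (adesc rho).
Proof.
have hp := ltn_ord p.
apply: coefn_drop_merge => //.
- by rewrite adesc_lift_lo // adesc_lift_hi.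
- move=> k hk; rewrite merge_fun_bump ?permv_lift_lo 1?ltnW //.
  by apply: permv_rho_neq; [exact: ltn_trans hp | rewrite ltn_eqF].
- by rewrite rho_p /merge_fun ltnn eqxx permv_lift_lo // permv_lift_succ rho_p /bump ltnn.
- move=> k /andP[hk1 hk2]; rewrite permv_lift_hi // merge_fun_bump //.
  by apply: permv_rho_neq; rewrite ?gtn_eqF.
- by move=> k hk; rewrite adesc_lift_lo 1?ltnW.
- by move=> k /andP[hk1 hk2]; rewrite adesc_lift_hi.
Qed.

Lemma prod_lift_sub (R : nzRingType) (F : nat -> R) :
  \prod_(k < n.+1) F (permv v k) - \prod_(k < n.+1) F (adjswap i (permv v k)) =
  \prod_(k < n) merge_fun F (F i * F i.+1 - F i.+1 * F i) i (permv rho k).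
Proof.
have hp := ltn_ord p.
have rho_neq k : (k < n)%N -> k != p -> permv rho k != i by exact: permv_rho_neq.
have vp : permv v p = i by rewrite permv_lift_lo // rho_p /bump ltnn.
pose g (x y : R) k := if k == nat_of_ord p then x * y else F (bump i.+1 (permv rho k)).
have merge_v (G : nat -> R) : (forall k, (k < n)%N -> k != p ->
      G (bump i.+1 (permv rho k)) = F (bump i.+1 (permv rho k))) ->
    \prod_(k < n.+1) G (permv v k) = \prod_(k < n) g (G i) (G i.+1) k.
  move=> hG; apply: (@prod_merge_at _ n p (fun k => G (permv v k)) (g (G i) (G i.+1)) hp).
  - move=> k hk; have hkn := ltn_trans hk hp.
    by rewrite /g ltn_eqF // permv_lift_lo ?(ltnW hk) // hG // ltn_eqF.
  - by rewrite /g eqxx vp permv_lift_succ.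
  - move=> k /andP[hk1 hk2].
    by rewrite /g gtn_eqF // permv_lift_hi // hG // gtn_eqF.
rewrite (merge_v F) // (merge_v (fun x => F (adjswap i x))); last first.
  by move=> k hk hkp; rewrite adjswap_bump // rho_neq.
rewrite /adjswap eqxx gtn_eqF // eqxx.
apply: (@prod_subr_at _ n p (g (F i) (F i.+1)) (g (F i.+1) (F i))
  (fun k => merge_fun F (F i * F i.+1 - F i.+1 * F i) i (permv rho k)) hp) => [k hk hkp|].
  by rewrite /g (negbTE hkp) merge_fun_bump // rho_neq.
by rewrite /g eqxx rho_p /merge_fun ltnn eqxx.
Qed.

End LiftAtAscent.

Section CoefficientDifference.
Variables (K : fieldType) (w : nat -> K).
Hypothesis w_prefix : forall p, (p < n)%N -> 1 - prefix_prod w p != 0.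

Lemma coefn_mulT_sub_up (v : 'S_n.+1) (p : 'I_n) : up_at v p ->
  coefn n.+1 w (adesc v) - coefn n.+1 w (adesc (v * T)) =
  \sum_(q < n | up_at v q) coefn_drop n.+1 w (adesc v) q
  - \sum_(q < n | down_at v q) coefn_drop n.+1 w (adesc (v * T)) q.
Proof.
move=> hu; have hpn := ltn_ord p; have hpn1 : (p < n.+1)%N := ltnW hpn.
have other (q : 'I_n) : q != p -> ~~ up_at v q && ~~ down_at v q.
  by move=> hqp; apply: up_at_other hu (ltn_ord q) hqp.
rewrite (big_pred1 p) => [|q /=]; last first.
  by have [->|/other/andP[/negbTE -> _]] := eqVneq q p.
rewrite big_pred0 => [|q /=]; last first.
  have [->|/other/andP[_ /negbTE //]] := eqVneq q p.
  by case/andP: hu => /eqP vp _; rewrite /down_at vp (ltn_eqF (ltnSn i)).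
rewrite subr0 (@eq_coefn _ _ w w (adesc (v * T)) (fun k => adesc v k + (k <= p))%N) //; last first.
  by move=> k _; exact: adesc_mulT_up k hpn hu.
by rewrite (coefn_shift _ _ hpn1) -{1}[coefn _ _ _]mulr1 -mulrBr
  (coefn_mul_denom _ hpn1 (w_prefix hpn)).
Qed.

Lemma coefn_mulT_sub (v : 'S_n.+1) :
  coefn n.+1 w (adesc v) - coefn n.+1 w (adesc (v * T)) =
  \sum_(q < n | up_at v q) coefn_drop n.+1 w (adesc v) q
  - \sum_(q < n | down_at v q) coefn_drop n.+1 w (adesc (v * T)) q.
Proof.
have [p /coefn_mulT_sub_up //|no_up] := pickP (fun p : 'I_n => up_at v p).
have [p hd|no_down] := pickP (fun p : 'I_n => down_at v p).
  rewrite -up_at_mulT // in hd; have := coefn_mulT_sub_up hd; rewrite mulTK.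
  rewrite (eq_bigl _ _ (fun q : 'I_n => up_at_mulT v (ltn_ord q))).
  rewrite (eq_bigl _ _ (fun q : 'I_n => down_at_mulT v (ltn_ord q))).
  by rewrite !(big_pred0 _ _ _ _ no_up) subr0 sub0r => <-; rewrite opprB.
rewrite !big_pred0 // subrr (@eq_coefn _ _ w w (adesc (v * T)) (adesc v)) ?subrr // => k _.
by apply: adesc_mulT_free => p hp; rewrite (no_up (Ordinal hp)) (no_down (Ordinal hp)).
Qed.

End CoefficientDifference.

Section SwapSum.
Variables (K : fieldType) (A : algType K) (W : nat -> K) (F : nat -> A).
Hypothesis W_prefix : forall (s : 'S_n.+1) p, (p < n)%N ->
  1 - prefix_prod (fun k => W (permv s k)) p != 0.

Let Fprod (s : 'S_n.+1) := \prod_(k < n.+1) F (permv s k).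
Let Fprod_swap (s : 'S_n.+1) := \prod_(k < n.+1) F (adjswap i (permv s k)).
Let Cup (s : 'S_n.+1) p := coefn_drop n.+1 (fun k => W (permv s k)) (adesc s) p.

Lemma AXn_adjswap :
  AXn n.+1 (fun k => W (adjswap i k)) (fun k => F (adjswap i k)) =
  \sum_(s : 'S_n.+1) coefn n.+1 (fun k => W (permv s k)) (adesc (s * T)) *: Fprod s.
Proof.
rewrite /AXn (reindex_inj (mulIg T)) /=; apply: eq_bigr => s _; congr (_ *: _).
  by apply: eq_coefn => // k hk; rewrite permv_mulT // adjswapK.
by apply: eq_bigr => k _; rewrite permv_mulT // adjswapK.
Qed.

Lemma sum_down_at_mulT :
  \sum_(s : 'S_n.+1) \sum_(p < n | down_at s p)
     coefn_drop n.+1 (fun k => W (permv s k)) (adesc (s * T)) p *: Fprod s =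
  \sum_(s : 'S_n.+1) \sum_(p < n | up_at s p) Cup s p *: Fprod_swap s.
Proof.
rewrite (reindex_inj (mulIg T)) /=; apply: eq_bigr => s _.
apply: eq_big => [p|p hd]; first by rewrite down_at_mulT.
have hu : up_at s p by rewrite -down_at_mulT.
rewrite mulTK; congr (_ *: _); last by apply: eq_bigr => k _; rewrite permv_mulT.
apply: coefn_drop_swap (ltn_ord p) (adesc_up_at (ltn_ord p) hu) _ => k hk.
by rewrite permv_mulT // (adjswap_permv_up (ltn_ord p) hu).
Qed.

Lemma sum_up_at_lift :
  \sum_(s : 'S_n.+1) \sum_(p < n | up_at s p) Cup s p *: (Fprod s - Fprod_swap s) =
  AXn n (merge_fun W (W i * W i.+1) i) (merge_fun F (F i * F i.+1 - F i.+1 * F i) i).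
Proof.
set W' := merge_fun W _ i; set F' := merge_fun F _ i.
pose H (r : 'S_n) :=
  coefn n (fun k => W' (permv r k)) (adesc r) *: \prod_(k < n) F' (permv r k).
transitivity (\sum_(r : 'S_n) \sum_(p < n | permv r p == i) H r); last first.
  apply: eq_bigr => r _; rewrite (big_pred1 (r^-1 (Ordinal hi)))%g // => q /=.
  by rewrite permvE -(canF_eq (permK r)).
rewrite (exchange_big_dep xpredT) //= [RHS](exchange_big_dep xpredT) //=.
apply: eq_bigr => p _; set a := lift ord0 p; set i1 := @Ordinal n.+1 i.+1 hi.
rewrite (eq_bigl (fun s : 'S_n.+1 => (s a == i1) && (permv s p == i))); last first.
  move=> s; rewrite /up_at andbC -[p.+1]/(nat_of_ord a) permvE.
  by rewrite -val_eqE.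
rewrite big_mkcondr sum_perm_sending [RHS]big_mkcond /=; apply: eq_bigr => r _.
have := @permv_lift_bump r p p (ltn_ord p); rewrite /bump ltnn add0n => ->.
have -> : (bump i.+1 (permv r p) == i) = (permv r p == i) by rewrite /bump; lia.
have [rho_p|//] := eqVneq (permv r p) i.
by rewrite /Cup /H coefn_drop_lift // prod_lift_sub.
Qed.

Theorem AXn_sub_adjswap :
  AXn n.+1 W F - AXn n.+1 (fun k => W (adjswap i k)) (fun k => F (adjswap i k)) =
  AXn n (merge_fun W (W i * W i.+1) i) (merge_fun F (F i * F i.+1 - F i.+1 * F i) i).
Proof.
rewrite AXn_adjswap -sum_up_at_lift /AXn -sumrB.
under eq_bigr => s _ do rewrite -[\prod_(k < n.+1) F (permv s k)]/(Fprod s)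
  -scalerBl (coefn_mulT_sub (W_prefix s)) scalerBl !scaler_suml.
rewrite sumrB sum_down_at_mulT -sumrB; apply: eq_bigr => s _.
by rewrite -sumrB; apply: eq_bigr => p _; rewrite scalerBr.
Qed.

End SwapSum.

End AdjacentTransposition.

Section SeqSurgery.
Variables (T : Type) (x0 : T) (i : nat) (s : seq T).
Hypothesis hi : (i.+1 < size s)%N.

Lemma size_swap_at : size (swap_at x0 i s) = size s.
Proof. by rewrite /swap_at size_cat size_take (ltnW hi) /= size_drop; lia. Qed.

Lemma nth_swap_at k : nth x0 (swap_at x0 i s) k = nth x0 s (adjswap i k).
Proof.
rewrite /swap_at nth_cat size_take (ltnW hi) /adjswap.
case: (ltngtP k i) => [hk|hk|->]; last by rewrite subnn.
  by rewrite nth_take // ltn_eqF // ltnW.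
rewrite -(subnSK hk) /=.
case: eqP => [->|hk1]; first by rewrite subnn.
have hk2 : (i.+1 < k)%N by lia.
by rewrite -(subnSK hk2) /= nth_drop; congr nth; lia.
Qed.

Lemma size_merge_at y : size (merge_at i y s) = (size s).-1.
Proof. by rewrite /merge_at size_cat size_take (ltnW hi) /= size_drop; lia. Qed.

Lemma nth_merge_at y k : nth x0 (merge_at i y s) k = merge_fun (nth x0 s) y i k.
Proof.
rewrite /merge_at /merge_fun nth_cat size_take (ltnW hi).
case: (ltngtP k i) => [hk|hk|->]; first by rewrite nth_take.
  by rewrite -(subnSK hk) /= nth_drop; congr nth; lia.
by rewrite subnn.
Qed.

End SeqSurgery.

Lemma Xroot_addroot (K : fieldType) r (X : 'I_r -> K) b c :
  Xroot X (addroot b c) = Xroot X b * Xroot X c.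
Proof. by rewrite /Xroot -big_split /=; apply: eq_bigr => j _; rewrite exprD. Qed.

Lemma prod_Xroot (K : fieldType) r (X : 'I_r -> K) m (g : nat -> 'I_r -> nat) :
  \prod_(j < m) Xroot X (g j) = \prod_(t < r) X t ^+ (\sum_(j < m) g j t).
Proof. by rewrite exchange_big; apply: eq_bigr => t _; rewrite prodrXr. Qed.

Lemma Xroot_prefix_neq1 (K : fieldType) r (X : 'I_r -> K)
    (HX : forall n : 'I_r -> nat, (exists j, n j != 0%N) -> \prod_(j < r) X j ^+ n j != 1)
    (g : nat -> 'I_r -> nat) p :
  (exists t, g 0%N t != 0%N) -> 1 - prefix_prod (fun k => Xroot X (g k)) p != 0.
Proof.
move=> [t ht]; rewrite subr_eq0 eq_sym /prefix_prod prod_Xroot; apply: HX.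
by exists t; rewrite big_ord_recl -lt0n addn_gt0 lt0n ht.
Qed.

Section AXSurgery.
Variables (K : fieldType) (A : algType K) (r : nat) (X : 'I_r -> K).
Variables (bs : seq ('I_r -> nat)) (Fs : seq A) (i : nat).
Hypotheses (hib : (i.+1 < size bs)%N) (hiF : (i.+1 < size Fs)%N).

Let b0 : 'I_r -> nat := fun _ => 0%N.
Let W k := Xroot X (nth b0 bs k).

Lemma AX_swap_at :
  AX X (swap_at b0 i bs) (swap_at 0 i Fs) =
  AXn (size Fs) (fun k => W (adjswap i k)) (fun k => nth 0 Fs (adjswap i k)).
Proof.
by rewrite AX_AXn size_swap_at //; apply: eq_AXn => k _; rewrite nth_swap_at.
Qed.

Lemma AX_merge_at y :
  AX X (merge_at i (addroot (nth b0 bs i) (nth b0 bs i.+1)) bs) (merge_at i y Fs) =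
  AXn (size Fs).-1 (merge_fun W (W i * W i.+1) i) (merge_fun (nth 0 Fs) y i).
Proof.
rewrite AX_AXn size_merge_at //; apply: eq_AXn => k _; rewrite nth_merge_at //.
by rewrite /merge_fun; do 2!case: ifP => // _; rewrite Xroot_addroot.
Qed.

End AXSurgery.

Theorem lemma4p5 (K : fieldType) (A : algType K) (r : nat) (X : 'I_r -> K)
    (HX : forall n : 'I_r -> nat, (exists j, n j != 0%N) ->
            \prod_(j < r) X j ^+ n j != 1)
    (m : nat) (bs : seq ('I_r -> nat)) (Fs : seq A)
    (hm : (2 <= m)%N) (hbs : size bs = m) (hFs : size Fs = m)
    (hpos : forall k, (k < m)%N -> exists j, nth (fun _ => 0%N) bs k j != 0%N)
    (l : nat) (hl : (1 <= l < m)%N) :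
  let b0 := fun _ : 'I_r => 0%N in
  let i := l.-1 in
  AX X bs Fs - AX X (swap_at b0 i bs) (swap_at 0 i Fs)
  = AX X (merge_at i (addroot (nth b0 bs i) (nth b0 bs i.+1)) bs)
         (merge_at i (nth 0 Fs i * nth 0 Fs i.+1 - nth 0 Fs i.+1 * nth 0 Fs i) Fs).
Proof.
move=> b0 i; case: m hm hbs hFs hpos hl => [//|n] _ hbs hFs hpos hl.
have hi : (i < n)%N by rewrite /i; lia.
have hib : (i.+1 < size bs)%N by rewrite hbs.
have hiF : (i.+1 < size Fs)%N by rewrite hFs.
rewrite AX_AXn AX_swap_at // AX_merge_at // hFs.
apply: (AXn_sub_adjswap hi) => s p _.
by apply: (Xroot_prefix_neq1 HX); apply/hpos/permv_lt.
Qed.
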